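(* Let $\mathbb{F}_q$ be a finite field and let $\mathcal{Q}=\mathbb{F}_q^3$ with the relation: $(x_1,y_1,z_1)$ and $(x_2,y_2,z_2)$ commute iff $x_1y_2-y_1x_2=z_1-z_2$. Then there exist three lines $L_1,L_2,L_3$ in $\mathbb{F}_q^3$ and a non-commuting subset of $\mathcal{Q}$ contained in $L_1\cup L_2\cup L_3$ of cardinality at least $3q-3$. Further, if $q>3$ and $\mathrm{char}(\mathbb{F}_q)\ne 2$, there exists a non-commuting subset of $\mathcal{Q}$ of cardinality $3q-2$ which is not contained in a union of three lines.
   Context: A line in $\mathbb{F}_q^3$ is a set $\{p+tv: t\in\mathbb{F}_q\}$ with $v\ne 0$. A subset of $\mathcal{Q}$ is non-commuting if no two distinct elements of it commute. *)

From HB Require Import structures.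
From mathcomp Require Import all_boot all_order all_algebra all_field.
Set Implicit Arguments. Unset Strict Implicit. Unset Printing Implicit Defensive.
Import GRing.Theory.
Local Open Scope ring_scope.

Definition i0 : 'I_3 := @Ordinal 3 0 isT.
Definition i1 : 'I_3 := @Ordinal 3 1 isT.
Definition i2 : 'I_3 := @Ordinal 3 2 isT.

Definition px {F : fieldType} (u : 'rV[F]_3) : F := u 0 i0.
Definition py {F : fieldType} (u : 'rV[F]_3) : F := u 0 i1.
Definition pz {F : fieldType} (u : 'rV[F]_3) : F := u 0 i2.

Definition qcommute {F : fieldType} (u v : 'rV[F]_3) : bool :=
  px u * py v - py u * px v == pz u - pz v.

Definition noncommuting {F : finFieldType} (S : {set 'rV[F]_3}) : Prop :=
  forall u v, u \in S -> v \in S -> u != v -> ~~ qcommute u v.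

Definition is_line {F : finFieldType} (L : {set 'rV[F]_3}) : Prop :=
  exists p v : 'rV[F]_3, v != 0 /\ L = [set p + t *: v | t : F].

From HB Require Import structures.
From mathcomp Require Import all_boot all_order all_algebra all_field.
From mathcomp Require Import ring zify.
Set Implicit Arguments. Unset Strict Implicit. Unset Printing Implicit Defensive.
Import GRing.Theory.
Local Open Scope ring_scope.

(* Points (t, a, c t) and (s, b, d s) commute iff t (b - c) = s (a - d).  Hence
   the points (t, a, c t) with t <> 0 are pairwise non-commuting when a <> c,
   and two such punctured lines with parameters (a, c) and (c, d), a <> d, have
   no commuting pair across them.  Chaining three distinct values cyclically,
   (y0, y2), (y1, y0), (y2, y1), gives 3 (q - 1) pairwise non-commuting points
   on three lines (for q = 2 three suitable points do).  If q >= 5, which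
   q > 3 and odd characteristic force, the point (0, Y, 0) with Y outside
   {y0, y1, y2} can be added.  Were the enlarged set covered by three lines,
   each punctured line, having more than three points, would share two points
   with, hence equal, one of them; so the three lines would be ours, and these
   miss (0, Y, 0). *)

Lemma uniq_seq_of_card (T : finType) n :
  (n <= #|T|)%N -> exists2 s : seq T, uniq s & size s = n.
Proof.
move=> le_nT; exists (take n (enum T)); first by rewrite take_uniq ?enum_uniq.
by rewrite size_takel // -cardE.
Qed.

Lemma cards_disjointU (T : finType) (A B : {set T}) :
  [disjoint A & B] -> #|A :|: B| = (#|A| + #|B|)%N.
Proof. by move/disjoint_setI0; rewrite cardsU => ->; rewrite cards0 subn0. Qed.

Lemma cards3_le (T : finType) (x y z : T) : (#|[set x; y; z]| <= 3)%N.
Proof. by rewrite -setUA cardsU1 cards2; case: (_ \notin _); case: (_ != _). Qed.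

Lemma set3_eq_of_subset (T : finType) (x0 x1 x2 y0 y1 y2 : T) :
  x0 != x1 -> x0 != x2 -> x1 != x2 ->
  [set x0; x1; x2] \subset [set y0; y1; y2] -> [set x0; x1; x2] = [set y0; y1; y2].
Proof.
move=> x01 x02 x12 sub; apply/eqP; rewrite eqEcard sub (leq_trans (cards3_le _ _ _)) //.
by rewrite -setUA cardsU1 cards2 !inE negb_or x01 x02 x12.
Qed.

Lemma set3P (T : finType) (x a b c : T) :
  reflect [\/ x = a, x = b | x = c] (x \in [set a; b; c]).
Proof.
rewrite !inE -orbA.
by apply: (iffP or3P) => -[]/eqP;
  [apply: Or31 | apply: Or32 | apply: Or33 | apply: Or31 | apply: Or32 | apply: Or33].
Qed.

Lemma setU3_exists (T : finType) (x : T) (L1 L2 L3 : {set T}) :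
  x \in L1 :|: L2 :|: L3 -> exists2 L, L \in [set L1; L2; L3] & x \in L.
Proof.
rewrite !in_setU => /orP[/orP[]|] xL; [exists L1 | exists L2 | exists L3] => //;
  by apply/set3P; constructor.
Qed.

Lemma three_cover_pigeonhole (T : finType) (A L1 L2 L3 : {set T}) :
  A \subset L1 :|: L2 :|: L3 -> (3 < #|A|)%N ->
  exists2 L, L \in [set L1; L2; L3] & (1 < #|A :&: L|)%N.
Proof.
move=> sub cardA.
have decA : A = (A :&: L1) :|: (A :&: L2) :|: (A :&: L3).
  by rewrite -!setIUr; apply/esym/setIidPl.
have : (#|A| <= #|A :&: L1| + #|A :&: L2| + #|A :&: L3|)%N.
  by rewrite {1}decA !cardsU; lia.
case: (ltnP 1 #|A :&: L1|) => [|le1]; first by exists L1; rewrite ?inE ?eqxx.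
case: (ltnP 1 #|A :&: L2|) => [|le2]; first by exists L2; rewrite ?inE ?eqxx ?orbT.
case: (ltnP 1 #|A :&: L3|) => [|le3]; first by exists L3; rewrite ?inE ?eqxx ?orbT.
lia.
Qed.

Section Lines.

Variable F : finFieldType.
Implicit Types (a b c d s t : F) (u v : 'rV[F]_3) (A B C L M : {set 'rV[F]_3}).

Definition row3 (a b c : F) : 'rV[F]_3 := \row_(j < 3) [:: a; b; c]`_j.

Lemma px_row3 a b c : px (row3 a b c) = a. Proof. by rewrite /px mxE. Qed.
Lemma py_row3 a b c : py (row3 a b c) = b. Proof. by rewrite /py mxE. Qed.
Lemma pz_row3 a b c : pz (row3 a b c) = c. Proof. by rewrite /pz mxE. Qed.

Lemma row3_inj a b c a' b' c' :
  row3 a b c = row3 a' b' c' -> [/\ a = a', b = b' & c = c'].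
Proof.
move=> e; split.
- by rewrite -(px_row3 a b c) e px_row3.
- by rewrite -(py_row3 a b c) e py_row3.
- by rewrite -(pz_row3 a b c) e pz_row3.
Qed.

Lemma qcommute_row3 a b c a' b' c' :
  qcommute (row3 a b c) (row3 a' b' c') = (a * b' - b * a' == c - c').
Proof. by rewrite /qcommute !(px_row3, py_row3, pz_row3). Qed.

Lemma qcommuteC u v : qcommute u v = qcommute v u.
Proof. by rewrite /qcommute; apply/eqP/eqP => e; rewrite -[RHS]opprB -e; ring. Qed.

Lemma line_through u v L :
  is_line L -> u \in L -> v \in L -> u != v -> L = [set u + s *: (v - u) | s : F].
Proof.
move=> [p [w [_ ->]]] /imsetP[t1 _ ->] /imsetP[t2 _ ->] neq.
have dt : t2 - t1 != 0 by apply: contraNneq neq => /eqP; rewrite subr_eq0 => /eqP ->.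
apply/setP => x; apply/imsetP/imsetP => [[t _ ->]|[s _ ->]].
- by exists ((t - t1) / (t2 - t1)) => //; apply/rowP => j; rewrite !mxE; field.
- by exists (t1 + s * (t2 - t1)) => //; apply/rowP => j; rewrite !mxE; ring.
Qed.

Lemma line_uniq u v L M :
  is_line L -> is_line M -> u \in L -> v \in L -> u \in M -> v \in M -> u != v -> L = M.
Proof.
move=> lL lM uL vL uM vM neq.
by rewrite (line_through lL uL vL neq) (line_through lM uM vM neq).
Qed.

Lemma line_mem_cover A M L1 L2 L3 :
  is_line M -> is_line L1 -> is_line L2 -> is_line L3 ->
  A \subset M -> A \subset L1 :|: L2 :|: L3 -> (3 < #|A|)%N -> M \in [set L1; L2; L3].
Proof.
move=> lM l1 l2 l3 AM cover cardA.
have [L Ls /card_gt1P [u [v [uAL vAL neq]]]] := three_cover_pigeonhole cover cardA.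
have lL : is_line L by case/set3P: Ls => ->.
move: uAL vAL; rewrite !in_setI => /andP[uA uL] /andP[vA vL].
by rewrite (line_uniq lM lL (subsetP AM u uA) (subsetP AM v vA) uL vL neq).
Qed.

Definition noncommuting_across A B := forall u v, u \in A -> v \in B -> ~~ qcommute u v.

Lemma noncommuting_acrossC A B : noncommuting_across A B -> noncommuting_across B A.
Proof. by move=> AB u v uB vA; rewrite qcommuteC AB. Qed.

Lemma noncommuting_acrossUl A B C :
  noncommuting_across A C -> noncommuting_across B C -> noncommuting_across (A :|: B) C.
Proof. by move=> ncAC ncBC u v; rewrite inE => /orP[] uX; [exact: ncAC | exact: ncBC]. Qed.

Lemma noncommutingU A B :
  noncommuting A -> noncommuting B -> noncommuting_across A B -> noncommuting (A :|: B).
Proof.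
move=> ncA ncB AB u v; rewrite !inE => /orP[] uX /orP[] vY neq.
- exact: ncA.
- exact: AB.
- exact: noncommuting_acrossC AB u v uX vY.
- exact: ncB.
Qed.

Lemma noncommuting_set3 u v w :
  ~~ qcommute u v -> ~~ qcommute u w -> ~~ qcommute v w -> noncommuting [set u; v; w].
Proof.
move=> uv uw vw x y /set3P[] -> /set3P[] ->; rewrite ?eqxx // => _; by rewrite // qcommuteC.
Qed.

Definition hline a c : {set 'rV[F]_3} := [set row3 t a (c * t) | t : F].

Definition hline_nz a c : {set 'rV[F]_3} := [set row3 t a (c * t) | t in [set~ 0]].

Lemma hline_nz_sub a c : hline_nz a c \subset hline a c.
Proof. by apply/subsetP => _ /imsetP[t _ ->]; apply/imsetP; exists t. Qed.

Lemma is_line_hline a c : is_line (hline a c).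
Proof.
exists (row3 0 a 0), (row3 1 0 c); split.
  by apply: contra_neq (@oner_neq0 F) => /(congr1 px); rewrite px_row3 /px mxE.
apply: eq_imset => t; apply/rowP => j; rewrite !mxE.
by case: j => [[|[|[|j]]] ?] //=; ring.
Qed.

Lemma py_hline a c u : u \in hline a c -> py u = a.
Proof. by case/imsetP => t _ ->; rewrite py_row3. Qed.

Lemma hline_inj a b c d : hline a c = hline b d -> a = b.
Proof.
move=> e; have : row3 0 a (c * 0) \in hline b d by rewrite -e; apply/imsetP; exists 0.
by move/py_hline; rewrite py_row3.
Qed.

Lemma axis_notin_hline a c Y : Y != a -> row3 0 Y 0 \notin hline a c.
Proof. by apply: contraNN => /py_hline; rewrite py_row3 => ->. Qed.

Lemma card_hline_nz a c : #|hline_nz a c| = #|F|.-1.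
Proof.
by rewrite card_imset ?cardsC1 // => t s /row3_inj[].
Qed.

Lemma disjoint_hline_nz a b c d : a != b -> [disjoint hline_nz a c & hline_nz b d].
Proof.
move=> ab; apply: disjointW (hline_nz_sub a c) (hline_nz_sub b d) _.
rewrite disjoints_subset; apply/subsetP => u /py_hline ua.
by rewrite inE; apply: contra ab => /py_hline ub; rewrite -ua -ub.
Qed.

Lemma qcommute_hline a b c d t s :
  qcommute (row3 t a (c * t)) (row3 s b (d * s)) = (t * (b - c) == s * (a - d)).
Proof.
rewrite qcommute_row3 -subr_eq0 -[X in _ = X]subr_eq0.
by congr (_ == 0); ring.
Qed.

Lemma noncommuting_hline_nz a c : a != c -> noncommuting (hline_nz a c).
Proof.
move=> ac _ _ /imsetP[t _ ->] /imsetP[s _ ->] neq.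
have ac0 : a - c != 0 by rewrite subr_eq0.
by rewrite qcommute_hline; apply: contra neq => /eqP/(mulIf ac0) ->.
Qed.

Lemma noncommuting_across_hline_nz a c d :
  a != d -> noncommuting_across (hline_nz a c) (hline_nz c d).
Proof.
move=> ad _ _ /imsetP[t _ ->] /imsetP[s s0 ->].
rewrite qcommute_hline subrr mulr0 eq_sym mulf_eq0 subr_eq0 negb_or ad andbT.
by move: s0; rewrite !inE.
Qed.

Lemma noncommuting_across_axis a c Y :
  Y != c -> noncommuting_across (hline_nz a c) [set row3 0 Y 0].
Proof.
move=> Yc _ _ /imsetP[t t0 ->] /set1P ->.
rewrite -[X in row3 0 Y X](mulr0 0) qcommute_hline mul0r mulf_eq0 subr_eq0 negb_or Yc andbT.
by move: t0; rewrite !inE.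
Qed.

Section Configuration.

Variables y0 y1 y2 : F.
Hypotheses (y01 : y0 != y1) (y02 : y0 != y2) (y12 : y1 != y2).

Definition tri_hline_nz := hline_nz y0 y2 :|: hline_nz y1 y0 :|: hline_nz y2 y1.

Lemma noncommuting_tri : noncommuting tri_hline_nz.
Proof.
have y10 : y1 != y0 by rewrite eq_sym.
have y21 : y2 != y1 by rewrite eq_sym.
have y20 : y2 != y0 by rewrite eq_sym.
apply: noncommutingU; first apply: noncommutingU.
- exact: noncommuting_hline_nz.
- exact: noncommuting_hline_nz.
- exact/noncommuting_acrossC/noncommuting_across_hline_nz.
- exact: noncommuting_hline_nz.
- apply: noncommuting_acrossUl; first exact: noncommuting_across_hline_nz.
  exact/noncommuting_acrossC/noncommuting_across_hline_nz.
Qed.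

Lemma card_tri : #|tri_hline_nz| = (3 * #|F|.-1)%N.
Proof.
rewrite !cards_disjointU ?card_hline_nz ?disjoint_hline_nz //; first lia.
by rewrite disjoints_subset subUset -!disjoints_subset !disjoint_hline_nz.
Qed.

Lemma tri_sub : tri_hline_nz \subset hline y0 y2 :|: hline y1 y0 :|: hline y2 y1.
Proof. by rewrite !setUSS ?hline_nz_sub. Qed.

Lemma tri_axis_not_three_lines Y :
  (4 < #|F|)%N -> Y != y0 -> Y != y1 -> Y != y2 ->
  ~ (exists L1 L2 L3 : {set 'rV[F]_3},
       [/\ is_line L1, is_line L2, is_line L3 &
           row3 0 Y 0 |: tri_hline_nz \subset L1 :|: L2 :|: L3]).
Proof.
move=> q5 Y0 Y1 Y2 [L1 [L2 [L3 [l1 l2 l3 cover]]]].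
have triL : tri_hline_nz \subset L1 :|: L2 :|: L3 := subset_trans (subsetU1 _ _) cover.
have memL a c : hline_nz a c \subset tri_hline_nz -> hline a c \in [set L1; L2; L3].
  move=> sub; apply: line_mem_cover (is_line_hline a c) l1 l2 l3 (hline_nz_sub a c) _ _.
    exact: subset_trans sub triL.
  by rewrite card_hline_nz; lia.
have ne a b c d : a != b -> hline a c != hline b d.
  by move=> ab; apply: contra_neq ab; exact: hline_inj.
have eqL : [set hline y0 y2; hline y1 y0; hline y2 y1] = [set L1; L2; L3].
  apply: set3_eq_of_subset; rewrite ?ne //.
  apply/subsetP => L /set3P[] ->; apply: memL.
  - exact: subset_trans (subsetUl _ _) (subsetUl _ _).
  - exact: subset_trans (subsetUr _ _) (subsetUl _ _).
  - exact: subsetUr.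
have [L Ls PL] := setU3_exists (subsetP cover _ (setU11 _ _)).
by move: Ls PL; rewrite -eqL => /set3P[] ->; apply/negP/axis_notin_hline.
Qed.

Lemma axis_notin_tri Y : Y != y0 -> Y != y1 -> Y != y2 -> row3 0 Y 0 \notin tri_hline_nz.
Proof.
move=> Y0 Y1 Y2; apply/negP => /(subsetP tri_sub); rewrite !in_setU => /orP[/orP[]|];
  exact/negP/axis_notin_hline.
Qed.

Lemma noncommuting_axis_tri Y :
  Y != y0 -> Y != y1 -> Y != y2 -> noncommuting (row3 0 Y 0 |: tri_hline_nz).
Proof.
move=> Y0 Y1 Y2; apply: noncommutingU; first by move=> u v /set1P -> /set1P ->; rewrite eqxx.
  exact: noncommuting_tri.
apply: noncommuting_acrossC; do 2?apply: noncommuting_acrossUl; exact: noncommuting_across_axis.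
Qed.

End Configuration.

End Lines.

Lemma three_points_on_lines (F : finFieldType) :
  exists L1 L2 L3 : {set 'rV[F]_3},
    [/\ is_line L1, is_line L2, is_line L3 &
      exists S : {set 'rV[F]_3},
        [/\ noncommuting S, S \subset L1 :|: L2 :|: L3 & #|S| = 3%N]].
Proof.
pose u1 := row3 (1 : F) 0 0; pose u2 := row3 (0 : F) 1 0; pose u3 := row3 (1 : F) 1 0.
exists (hline 0 0), (hline 1 0), (hline 1 0); split; try exact: is_line_hline.
exists [set u1; u2; u3]; split.
- by apply: noncommuting_set3;
    rewrite qcommute_row3 !(mulr0, mul0r, mulr1, subr0, sub0r, subrr) ?oppr_eq0 ?oner_eq0.
- apply/subsetP => u /set3P[] ->.
  + by do 2!apply: (subsetP (subsetUl _ _)); apply/imsetP; exists 1; rewrite ?mul0r.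
  + by apply: (subsetP (subsetUr _ _)); apply/imsetP; exists 0; rewrite ?mul0r.
  + by apply: (subsetP (subsetUr _ _)); apply/imsetP; exists 1; rewrite ?mul0r.
- have u12 : u1 != u2 by apply/eqP => /row3_inj[/eqP]; rewrite oner_eq0.
  have u13 : u1 != u3 by apply/eqP => /row3_inj[_ /eqP]; rewrite eq_sym oner_eq0.
  have u23 : u2 != u3 by apply/eqP => /row3_inj[/eqP]; rewrite eq_sym oner_eq0.
  by rewrite -setUA cardsU1 cards2 !inE negb_or u12 u13 u23.
Qed.

Lemma noncommuting_on_three_lines (F : finFieldType) :
  exists L1 L2 L3 : {set 'rV[F]_3},
    [/\ is_line L1, is_line L2, is_line L3 &
      exists S : {set 'rV[F]_3},
        [/\ noncommuting S, S \subset L1 :|: L2 :|: L3 & (3 * #|F| - 3 <= #|S|)%N]].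
Proof.
have [q2|q3] := leqP #|F| 2.
  have [L1 [L2 [L3 [l1 l2 l3 [S [ncS SL cardS]]]]]] := three_points_on_lines F.
  by exists L1, L2, L3; split=> //; exists S; split=> //; rewrite cardS; lia.
have [[|y0 [|y1 [|y2 []]]] //] := uniq_seq_of_card q3.
rewrite /= !inE !negb_or andbT => /andP[/andP[y01 y02] y12] _.
exists (hline y0 y2), (hline y1 y0), (hline y2 y1); split; try exact: is_line_hline.
exists (tri_hline_nz y0 y1 y2); split.
- exact: noncommuting_tri.
- exact: tri_sub.
- by rewrite card_tri // -subn1 mulnBr muln1.
Qed.

Lemma card_gt4_finField (F : finFieldType) :
  (3 < #|F|)%N -> 2%N \notin [pchar F] -> (4 < #|F|)%N.
Proof.
move=> q4 char2; rewrite ltn_neqAle q4 andbT; apply: contraNneq char2 => q_eq4.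
exact: (@card_finPcharP F 2 2).
Qed.

Lemma noncommuting_off_three_lines (F : finFieldType) :
  (4 < #|F|)%N ->
  exists S : {set 'rV[F]_3},
    [/\ noncommuting S, #|S| = (3 * #|F| - 2)%N &
      ~ (exists L1 L2 L3 : {set 'rV[F]_3},
           [/\ is_line L1, is_line L2, is_line L3 & S \subset L1 :|: L2 :|: L3])].
Proof.
move=> q5; have [[|y0 [|y1 [|y2 [|Y []]]]] //] := uniq_seq_of_card (ltnW q5).
rewrite /= !inE !negb_or andbT => /and3P[/and3P[y01 y02 y0Y] /andP[y12 y1Y] y2Y] _.
rewrite !(eq_sym _ Y) in y0Y y1Y y2Y.
exists (row3 0 Y 0 |: tri_hline_nz y0 y1 y2); split.
- exact: noncommuting_axis_tri.
- rewrite cardsU1 axis_notin_tri ?card_tri //.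
  (* [#|F|] occurs in two convertible but syntactically different forms. *)
  by set q := #|F| in q5 *; lia.
- exact: tri_axis_not_three_lines.
Qed.

Theorem lemma7p5 (F : finFieldType) :
  (exists L1 L2 L3 : {set 'rV[F]_3},
     [/\ is_line L1, is_line L2, is_line L3 &
       exists S : {set 'rV[F]_3},
         [/\ noncommuting S, S \subset L1 :|: L2 :|: L3 &
             (3 * #|F| - 3 <= #|S|)%N]]) /\
  ((3 < #|F|)%N -> 2%N \notin [pchar F] ->
     exists S : {set 'rV[F]_3},
       [/\ noncommuting S, #|S| = (3 * #|F| - 2)%N &
         ~ (exists L1 L2 L3 : {set 'rV[F]_3},
              [/\ is_line L1, is_line L2, is_line L3 &
                  S \subset L1 :|: L2 :|: L3])]).
Proof.
split=> [|q4 char2]; first exact: noncommuting_on_three_lines.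
exact/noncommuting_off_three_lines/card_gt4_finField.
Qed.
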